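(* Let $n\in\{2,4,8\}$ and $V_0=\{v\in\{-1,1\}^n : v_1=1,\ \sum_i v_i=0\}$. Then there exist signs $\varepsilon_v\in\{-1,1\}$, $v\in V_0$, and a vector $w\in\mathbb{Z}^n$ with $w_i\ge -1$ for all $i$, such that $\sum_{v\in V_0}\varepsilon_v v=w$. *)

From mathcomp Require Import all_boot all_order all_algebra.
Set Implicit Arguments. Unset Strict Implicit. Unset Printing Implicit Defensive.
Import Order.TTheory GRing.Theory Num.Theory.
Local Open Scope ring_scope.

(* A vector v in {-1,1}^n is encoded by b : {ffun 'I_n -> bool}, with
   v_i = 1 if b i = true and v_i = -1 if b i = false. Coordinates are
   0-indexed: paper's v_1 is the coordinate with index 0. *)
Definition sgb (b : bool) : int := if b then 1 else -1.

Definition pmvec (n : nat) (b : {ffun 'I_n -> bool}) (i : 'I_n) : int := sgb (b i).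

Definition V0 (n : nat) : {set {ffun 'I_n -> bool}} :=
  [set b : {ffun 'I_n -> bool} |
     [forall i : 'I_n, (nat_of_ord i == 0%N) ==> b i]
     && (\sum_(i < n) pmvec b i == 0)].

From mathcomp Require Import all_boot all_order all_algebra.
Import Order.TTheory GRing.Theory Num.Theory.
Local Open Scope ring_scope.

(* For n = 2 and n = 4 all signs +1 already work: the sum is (n-1, -1, ..., -1).
   For n = 8 the plain sum is (35, -5, ..., -5). Index coordinates 2..8 by Z/7;
   the +1 coordinates of v among them form a 3-subset of Z/7, and the 7
   translates of a 3-subset cover every point exactly 3 times, so the vectors
   of one translation orbit sum to (7, -1, ..., -1). Negating two orbits gives
   (35 - 28, -5 + 4, ..., -5 + 4) = (7, -1, ..., -1). *)

Fixpoint bool_seqs (n : nat) : seq (seq bool) :=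
  if n is m.+1 then
    [seq true :: s | s <- bool_seqs m] ++ [seq false :: s | s <- bool_seqs m]
  else [:: [::]].

Lemma size_bool_seqs n s : s \in bool_seqs n -> size s = n.
Proof.
elim: n s => [|n IHn] s; first by rewrite inE => /eqP->.
by rewrite mem_cat => /orP[] /mapP[t /IHn <- ->].
Qed.

Definition ffun_of_seq n (s : seq bool) : {ffun 'I_n -> bool} :=
  [ffun i : 'I_n => nth false s i].

Lemma codom_ffun_of_seq n s : size s = n -> codom (ffun_of_seq n s) = s.
Proof.
move=> <-; rewrite codomE -[RHS](mkseq_nth false) /mkseq -val_enum_ord -map_comp.
by apply: eq_map => i; rewrite /= ffunE.
Qed.

Lemma big_ffun_bool_seqs R (idx : R) (op : Monoid.com_law idx) n
    (F : {ffun 'I_n -> bool} -> R) :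
  \big[op/idx]_(b : {ffun 'I_n -> bool}) F b
    = \big[op/idx]_(s <- bool_seqs n) F (ffun_of_seq n s).
Proof.
elim: n F => [|n IHn] F.
  rewrite big_seq1 (big_pred1 (ffun_of_seq 0 [::])) // => b /=.
  by apply/esym/eqP/ffunP => -[].
pose cons_ffun (p : bool * {ffun 'I_n -> bool}) : {ffun 'I_n.+1 -> bool} :=
  [ffun i => if unlift ord0 i is Some j then p.2 j else p.1].
have cons_ffun_bij : bijective cons_ffun.
  exists (fun b : {ffun 'I_n.+1 -> bool} => (b ord0, [ffun j => b (lift ord0 j)]))
    => [[x b] | b].
    by congr pair; [rewrite ffunE unlift_none
                   | apply/ffunP => j; rewrite !ffunE liftK].
  by apply/ffunP => i; rewrite ffunE; case: unliftP => [j ->|->]; rewrite ?ffunE.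
have cons_ffun_seq x s : cons_ffun (x, ffun_of_seq n s) = ffun_of_seq n.+1 (x :: s).
  by apply/ffunP => i; rewrite !ffunE; case: unliftP => [j ->|->]; rewrite ?ffunE.
rewrite (reindex cons_ffun) /=; last by apply: onW_bij.
rewrite -(pair_bigA _ (fun x b => F (cons_ffun (x, b)))) big_bool /=.
rewrite big_cat !big_map !IHn.
by congr (op _ _); apply: eq_bigr => s _; rewrite cons_ffun_seq.
Qed.

Definition V0_seq (s : seq bool) : bool :=
  head true s && (\sum_(x <- s) sgb x == 0).

Lemma V0_ffun_of_seq n s : size s = n -> (ffun_of_seq n s \in V0 n) = V0_seq s.
Proof.
move=> <-; rewrite inE /V0_seq; congr andb.
  case: s => [|x s] /=; first by apply/forallP => -[].
  apply/forallP/idP => [/(_ ord0)|x_true [[|k] lt_k]]; rewrite ?ffunE //.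
by rewrite (big_nth false) big_mkord; under eq_bigr do rewrite /pmvec ffunE.
Qed.

Definition V0_column_sums (eps : seq bool -> bool) n : seq int :=
  [seq \sum_(s <- bool_seqs n | V0_seq s) sgb (eps s) * sgb (nth false s k)
  | k <- iota 0 n].

Lemma V0_signed_sumE eps n (i : 'I_n) :
  \sum_(b in V0 n) sgb (eps (codom b)) * pmvec b i = (V0_column_sums eps n)`_i.
Proof.
rewrite (nth_map 0%N) ?size_iota // nth_iota // add0n.
rewrite big_mkcond big_ffun_bool_seqs [RHS]big_mkcond big_seq [RHS]big_seq.
apply: eq_bigr => s /size_bool_seqs size_s.
by rewrite V0_ffun_of_seq // codom_ffun_of_seq // /pmvec ffunE.
Qed.

Lemma V0_signed_sum_witness (eps : seq bool -> bool) n :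
    V0_column_sums eps n = n.-1%:Z :: nseq n.-1 (-1) ->
  exists (eps' : {ffun 'I_n -> bool} -> bool) (w : 'I_n -> int),
    (forall i : 'I_n, -1 <= w i) /\
    (forall i : 'I_n, \sum_(b in V0 n) sgb (eps' b) * pmvec b i = w i).
Proof.
move=> sums; exists (fun b => eps (codom b)), (fun i => (V0_column_sums eps n)`_i).
split=> i; last exact: V0_signed_sumE.
by rewrite sums; case: (nat_of_ord i) => [|k] //=; rewrite nth_nseq; case: ifP.
Qed.

Definition cyclic_shifts (t : seq bool) : seq (seq bool) :=
  [seq rot k t | k <- iota 0 (size t)].

Definition fano_line : seq bool := [:: true; true; false; true; false; false; false].

Definition consecutive_triple : seq bool :=
  [:: true; true; true; false; false; false; false].

Definition triple_orbit_sign (s : seq bool) : bool :=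
  behead s \notin cyclic_shifts fano_line ++ cyclic_shifts consecutive_triple.

Theorem lemmaA2 (n : nat) (hn : n \in [:: 2%N; 4%N; 8%N]) :
  exists (eps : {ffun 'I_n -> bool} -> bool) (w : 'I_n -> int),
    (forall i : 'I_n, -1 <= w i) /\
    (forall i : 'I_n, \sum_(b in V0 n) sgb (eps b) * pmvec b i = w i).
Proof.
move: hn; rewrite !inE => /or3P[]/eqP->;
  [ apply: (V0_signed_sum_witness (fun=> true))
  | apply: (V0_signed_sum_witness (fun=> true))
  | apply: (V0_signed_sum_witness triple_orbit_sign) ];
  by rewrite /V0_column_sums /V0_seq !unlock; vm_compute.
Qed.
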